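(* Let $(\mathbf{x}^*,\boldsymbol{\lambda}^* )$ be a saddle point of the problem, i.e. $\mathcal{A}(\mathbf{x}^* )=\mathbf{b}$ and $-\mathcal{A}^T(\boldsymbol{\lambda}^* )\in\partial f(\mathbf{x}^* )$, and let $\{\mathbf{x}^k,\mathbf{z}^k,\boldsymbol{\lambda}^k\}$ be generated by the Fast PALM algorithm. Then for every $K>0$, $$f(\mathbf{x}^{K+1})-f(\mathbf{x}^* )+\langle\boldsymbol{\lambda}^*,\mathcal{A}(\mathbf{x}^{K+1})-\mathbf{b}\rangle+\frac12\|\mathcal{A}(\mathbf{x}^{K+1})-\mathbf{b}\|^2\le\frac{2}{(K+2)^2}\Bigl(L\|\mathbf{z}^0-\mathbf{x}^*\|^2+\|\boldsymbol{\lambda}^0-\boldsymbol{\lambda}^*\|^2\Bigr).$$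
   Context: Setting: finite-dimensional real inner product spaces with induced norms $\|\cdot\|$. Problem: $\min_{\mathbf{x}} f(\mathbf{x})=g(\mathbf{x})+h(\mathbf{x})$ subject to $\mathcal{A}(\mathbf{x})=\mathbf{b}$, where $g,h$ are proper convex lower semicontinuous, $g$ is differentiable with $L$-Lipschitz gradient ($L>0$), $\mathcal{A}$ is linear with adjoint $\mathcal{A}^T$. Fast PALM: given $\mathbf{x}^0,\mathbf{z}^0,\boldsymbol{\lambda}^0$ and $\theta^{(0)}=\beta^{(0)}=1$, for $k=0,1,2,\dots$: $\mathbf{y}^{k+1}=(1-\theta^{(k)})\mathbf{x}^k+\theta^{(k)}\mathbf{z}^k$; $\mathbf{z}^{k+1}=\arg\min_{\mathbf{x}}\ \langle\nabla g(\mathbf{y}^{k+1}),\mathbf{x}\rangle+h(\mathbf{x})+\langle\boldsymbol{\lambda}^k,\mathcal{A}(\mathbf{x})\rangle+\frac{\beta^{(k)}}{2}\|\mathcal{A}(\mathbf{x})-\mathbf{b}\|^2+\frac{L\theta^{(k)}}{2}\|\mathbf{x}-\mathbf{z}^k\|^2$; $\mathbf{x}^{k+1}=(1-\theta^{(k)})\mathbf{x}^k+\theta^{(k)}\mathbf{z}^{k+1}$; $\boldsymbol{\lambda}^{k+1}=\boldsymbol{\lambda}^k+\beta^{(k)}(\mathcal{A}(\mathbf{z}^{k+1})-\mathbf{b})$; $\theta^{(k+1)}=\frac{-(\theta^{(k)})^2+\sqrt{(\theta^{(k)})^4+4(\theta^{(k)})^2}}{2}$; $\beta^{(k+1)}=1/\theta^{(k+1)}$.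 (In the paper the right-hand side is written $\frac{2}{(K+2)^2}(LD_{\mathbf{x}^*}^2+D_{\boldsymbol{\lambda}^*}^2)$, with the initialization $\mathbf{z}^0=\mathbf{x}^0$ implicitly making $D_{\mathbf{x}^*}=\|\mathbf{x}^0-\mathbf{x}^*\|=\|\mathbf{z}^0-\mathbf{x}^*\|$ and $D_{\boldsymbol{\lambda}^*}=\|\boldsymbol{\lambda}^0-\boldsymbol{\lambda}^*\|$.) *)

From mathcomp Require Import all_boot.
From Stdlib Require Import Reals.
Set Implicit Arguments.
Unset Strict Implicit.

Local Open Scope R_scope.

Definition vec (n : nat) := 'I_n -> R.

Definition vadd {n} (u v : vec n) : vec n := fun i => u i + v i.
Definition vsub {n} (u v : vec n) : vec n := fun i => u i - v i.
Definition vscale {n} (a : R) (u : vec n) : vec n := fun i => a * u i.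

Definition inner {n} (u v : vec n) : R := \big[Rplus/0]_(i < n) (u i * v i).
Definition norm {n} (u : vec n) : R := sqrt (inner u u).

Definition linear_map {n m} (A : vec n -> vec m) : Prop :=
  (forall u v, forall j, A (vadd u v) j = vadd (A u) (A v) j) /\
  (forall a u, forall j, A (vscale a u) j = vscale a (A u) j).

Definition is_adjoint {n m} (A : vec n -> vec m) (AT : vec m -> vec n) : Prop :=
  forall x y, inner (A x) y = inner x (AT y).

Inductive ER := Fin (r : R) | PInf.

Definition ER_le (a b : ER) : Prop :=
  match a, b with
  | _, PInf => True
  | PInf, Fin _ => False
  | Fin x, Fin y => x <= y
  end.

Definition ER_add (a b : ER) : ER :=
  match a, b with
  | Fin x, Fin y => Fin (x + y)
  | _, _ => PInf
  end.

(* proper (never -oo by construction; finite somewhere) *)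
Definition proper_fun {n} (h : vec n -> ER) : Prop := exists x, h x <> PInf.

Definition convexE {n} (h : vec n -> ER) : Prop :=
  forall x y (t a b : R), 0 <= t <= 1 ->
    ER_le (h x) (Fin a) -> ER_le (h y) (Fin b) ->
    ER_le (h (vadd (vscale t x) (vscale (1 - t) y))) (Fin (t * a + (1 - t) * b)).

Definition convexR {n} (g : vec n -> R) : Prop :=
  forall x y (t : R), 0 <= t <= 1 ->
    g (vadd (vscale t x) (vscale (1 - t) y)) <= t * g x + (1 - t) * g y.

(* lower semicontinuity: h x <= liminf_{y -> x} h y (closed epigraph) *)
Definition lscE {n} (h : vec n -> ER) : Prop :=
  forall x (r : R),
    (forall eps, 0 < eps -> exists y, norm (vsub y x) < eps /\ ER_le (h y) (Fin (r + eps))) ->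
    ER_le (h x) (Fin r).

Definition has_gradient {n} (g : vec n -> R) (dg : vec n -> vec n) : Prop :=
  forall x eps, 0 < eps -> exists delta, 0 < delta /\
    forall d, norm d < delta ->
      Rabs (g (vadd x d) - g x - inner (dg x) d) <= eps * norm d.

Definition lipschitz_grad {n} (dg : vec n -> vec n) (L : R) : Prop :=
  forall x y, norm (vsub (dg x) (dg y)) <= L * norm (vsub x y).

Definition subgrad {n} (F : vec n -> ER) (x v : vec n) : Prop :=
  exists fx, F x = Fin fx /\
    forall y, ER_le (Fin (fx + inner v (vsub y x))) (F y).

Fixpoint theta (k : nat) : R :=
  match k with
  | O => 1
  | S k' => let t := theta k' in (- t ^ 2 + sqrt (t ^ 4 + 4 * t ^ 2)) / 2
  end.

Definition beta (k : nat) : R := 1 / theta k.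

From mathcomp Require Import all_boot.
From Stdlib Require Import Reals Lra Psatz FunctionalExtensionality.
Set Implicit Arguments.
Unset Strict Implicit.
Local Open Scope R_scope.

(* With r_k := f(x^k) - f(x^* ) + <lam^*, A x^k - b> + |A x^k - b|^2 / 2 and
   E_k := L |z^k - x^*|^2 + |lam^k - lam^*|^2, one iteration satisfies
     r_(k+1) <= (1 - theta_k) r_k + theta_k^2 / 2 (E_k - E_(k+1)).
   This combines the descent lemma and convexity of g at y^(k+1), the optimality of z^(k+1)
   for its subproblem tested at x^*, convexity of h and of the squared norm, and the
   three-point identity for z and for lam (using A z^(k+1) - b = theta_k (lam^(k+1) - lam^k)).
   Since theta_(k+1)^2 = (1 - theta_(k+1)) theta_k^2 and theta_0 = 1 the estimates
   telescope to r_(K+1) <= theta_K^2 E_0 / 2, and 1/theta_(k+1) >= 1/theta_k + 1/2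
   gives theta_K <= 2 / (K + 2). *)

Ltac vec_ring :=
  apply: functional_extensionality => ?; cbv [vadd vsub vscale]; ring.

Section InnerProduct.
Variable n : nat.
Implicit Types (u v w : vec n) (F G : 'I_n -> R).

Lemma sumR_split F G :
  \big[Rplus/0]_(i < n) (F i + G i)
  = \big[Rplus/0]_(i < n) F i + \big[Rplus/0]_(i < n) G i.
Proof.
apply: (big_rec3 (fun x y z => x = y + z)); first ring.
by move=> i y1 y2 y3 _ ->; ring.
Qed.

Lemma sumR_distrl a F :
  \big[Rplus/0]_(i < n) (a * F i) = a * \big[Rplus/0]_(i < n) F i.
Proof.
apply: (big_rec2 (fun x y => x = a * y)); first ring.
by move=> i y1 y2 _ ->; ring.
Qed.

Lemma sumR_ge0 F : (forall i, 0 <= F i) -> 0 <= \big[Rplus/0]_(i < n) F i.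
Proof.
move=> F_ge0; apply: (big_rec (fun x => 0 <= x)); first lra.
by move=> i x _ x_ge0; have := F_ge0 i; lra.
Qed.

Lemma innerC u v : inner u v = inner v u.
Proof. by apply: eq_bigr => i _; ring. Qed.

Lemma innerDl u v w : inner (vadd u v) w = inner u w + inner v w.
Proof. by rewrite /inner -sumR_split; apply: eq_bigr => i _; rewrite /vadd; ring. Qed.

Lemma innerDr u v w : inner w (vadd u v) = inner w u + inner w v.
Proof. by rewrite innerC innerDl !(innerC w). Qed.

Lemma innerZl a u w : inner (vscale a u) w = a * inner u w.
Proof. by rewrite /inner -sumR_distrl; apply: eq_bigr => i _; rewrite /vscale; ring. Qed.

Lemma innerZr a u w : inner w (vscale a u) = a * inner w u.
Proof. by rewrite innerC innerZl innerC. Qed.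

Lemma innerBl u v w : inner (vsub u v) w = inner u w - inner v w.
Proof.
have ->: vsub u v = vadd u (vscale (-1) v) by vec_ring.
by rewrite innerDl innerZl; ring.
Qed.

Lemma innerBr u v w : inner w (vsub u v) = inner w u - inner w v.
Proof. by rewrite innerC innerBl !(innerC w). Qed.

Lemma inner_self_ge0 u : 0 <= inner u u.
Proof. by apply: sumR_ge0 => i; nra. Qed.

Lemma sqnormB u v :
  inner (vsub u v) (vsub u v) = inner u u - 2 * inner u v + inner v v.
Proof. by rewrite !innerBl !innerBr (innerC v u); ring. Qed.

Lemma sqnormDZ a u v :
  inner (vadd u (vscale a v)) (vadd u (vscale a v))
  = inner u u + 2 * a * inner u v + a ^ 2 * inner v v.
Proof. by rewrite !innerDl !innerDr !innerZl !innerZr (innerC v u); ring. Qed.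

Lemma sqnormZ a u : inner (vscale a u) (vscale a u) = a ^ 2 * inner u u.
Proof. by rewrite innerZl innerZr; ring. Qed.

Lemma sqnorm_three_point u v w :
  2 * inner (vsub u v) (vsub w u) + inner (vsub u v) (vsub u v)
  = inner (vsub v w) (vsub v w) - inner (vsub u w) (vsub u w).
Proof. by rewrite !sqnormB !innerBl !innerBr (innerC v u) ?(innerC w u) ?(innerC w v); ring. Qed.

Lemma sqnorm_convex t u v : 0 <= t <= 1 ->
  inner (vadd (vscale (1 - t) u) (vscale t v)) (vadd (vscale (1 - t) u) (vscale t v))
  <= (1 - t) * inner u u + t * inner v v.
Proof.
move=> t01; have := inner_self_ge0 (vsub u v); rewrite sqnormB => uv_ge0.
rewrite !innerDl !innerDr !innerZl !innerZr (innerC v u).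
have : 0 <= t * (1 - t) * (inner u u - 2 * inner u v + inner v v).
  by apply: Rmult_le_pos; nra.
nra.
Qed.

Lemma norm_ge0 u : 0 <= norm u.
Proof. exact: sqrt_pos. Qed.

Lemma norm_sqr u : norm u * norm u = inner u u.
Proof. exact/sqrt_sqrt/inner_self_ge0. Qed.

Lemma normZ a u : norm (vscale a u) = Rabs a * norm u.
Proof.
rewrite /norm sqnormZ -sqrt_Rsqr_abs -sqrt_mult.
- by rewrite /Rsqr; congr sqrt; ring.
- exact: Rle_0_sqr.
- exact: inner_self_ge0.
Qed.

End InnerProduct.

Section LinearMap.
Variables (n m : nat) (A : vec n -> vec m).
Hypothesis A_linear : linear_map A.

Lemma linear_mapD u v : A (vadd u v) = vadd (A u) (A v).
Proof. by case: A_linear => AD _; apply: functional_extensionality => j; apply: AD. Qed.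

Lemma linear_mapZ a u : A (vscale a u) = vscale a (A u).
Proof. by case: A_linear => _ AZ; apply: functional_extensionality => j; apply: AZ. Qed.

Lemma linear_mapB u v : A (vsub u v) = vsub (A u) (A v).
Proof.
have ->: vsub u v = vadd u (vscale (-1) v) by vec_ring.
by rewrite linear_mapD linear_mapZ; vec_ring.
Qed.

End LinearMap.

Lemma exists_small_scale (N delta : R) : 0 <= N -> 0 < delta ->
  exists s, 0 < s <= 1 /\ s * N < delta.
Proof.
move=> N_ge0 delta_gt0; set q := delta / (N + 1).
have q_gt0 : 0 < q by apply: Rdiv_lt_0_compat; lra.
have qN1 : q * (N + 1) = delta by rewrite /q; field; lra.
exists (Rmin 1 q); have := Rmin_l 1 q; have := Rmin_r 1 q.
have : 0 < Rmin 1 q by apply: Rmin_glb_lt; lra.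
nra.
Qed.

Lemma le0_of_le_scaled (a c : R) : (forall t, 0 < t <= 1 -> a <= t * c) -> a <= 0.
Proof.
move=> a_le; apply: Rnot_lt_le => a_gt0.
have [s [s01 s_small]] := exists_small_scale (Rabs_pos c) a_gt0.
have := a_le s s01; have := Rle_abs c; nra.
Qed.

Section Smooth.
Variables (n : nat) (g : vec n -> R) (dg : vec n -> vec n).
Hypothesis g_grad : has_gradient g dg.

Lemma convex_gradient_ineq : convexR g ->
  forall y u, g y + inner (dg y) (vsub u y) <= g u.
Proof.
move=> g_conv y u; set d := vsub u y.
suff: inner (dg y) d - (g u - g y) <= 0 by lra.
apply: (le0_of_le_scaled (c := norm d)) => eps eps01.
have [delta [delta_gt0 g_approx]] := g_grad y (proj1 eps01).
have [s [s01 s_small]] := exists_small_scale (norm_ge0 d) delta_gt0.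
have sd_small : norm (vscale s d) < delta by rewrite normZ Rabs_pos_eq; lra.
have := g_approx _ sd_small.
have -> : vadd y (vscale s d) = vadd (vscale s u) (vscale (1 - s) y) by rewrite /d; vec_ring.
rewrite normZ (Rabs_pos_eq s) ?innerZr; last lra.
have := g_conv u y s ltac:(lra); have := norm_ge0 d.
split_Rabs => *; apply: (Rmult_le_reg_l s); nra.
Qed.

Lemma directional_derivative y d t :
  derivable_pt_lim (fun t => g (vadd y (vscale t d))) t
    (inner (dg (vadd y (vscale t d))) d).
Proof.
move=> eps eps_gt0; set N := norm d; set p := vadd y (vscale t d).
have N_ge0 : 0 <= N := norm_ge0 d.
set q := eps / (2 * (N + 1)).
have q_gt0 : 0 < q by apply: Rdiv_lt_0_compat; lra.
have qN : q * (N + 1) * 2 = eps by rewrite /q; field; lra.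
have [delta [delta_gt0 g_approx]] := g_grad p q_gt0.
have delta'_gt0 : 0 < delta / (N + 1) by apply: Rdiv_lt_0_compat; lra.
exists (mkposreal _ delta'_gt0) => s s_neq0 /= s_small.
have abs_s_gt0 : 0 < Rabs s by apply: Rabs_pos_lt.
have sN_small : Rabs s * N < delta.
  have : Rabs s * (N + 1) < delta.
    have := Rmult_lt_compat_r (N + 1) _ _ ltac:(lra) s_small.
    by rewrite /Rdiv Rmult_assoc Rinv_l; lra.
  nra.
have := g_approx (vscale s d); rewrite normZ -/N => /(_ sN_small).
have -> : vadd p (vscale s d) = vadd y (vscale (t + s) d) by rewrite /p; vec_ring.
rewrite innerZr => approx.
have -> : (g (vadd y (vscale (t + s) d)) - g p) / s - inner (dg p) d
        = (g (vadd y (vscale (t + s) d)) - g p - s * inner (dg p) d) / s by field.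
rewrite /Rdiv Rabs_mult Rabs_inv.
apply: (Rle_lt_trans _ (q * N)); last nra.
apply: (Rmult_le_reg_r (Rabs s)) => //.
rewrite Rmult_assoc Rinv_l ?Rmult_1_r; lra.
Qed.

Lemma descent_lemma (L : R) : 0 < L -> lipschitz_grad dg L ->
  forall y d, g (vadd y d) <= g y + inner (dg y) d + L / 2 * inner d d.
Proof.
move=> L_gt0 dg_lip y d.
set G0 := inner (dg y) d; set dd := inner d d.
(* Mean value theorem on [0, 1] for [psi], whose derivative is [<= 0] by the Lipschitz bound. *)
set psi := fun t => g (vadd y (vscale t d)) - (t * G0 + L / 2 * dd * t ^ 2).
set psi' := fun t => inner (dg (vadd y (vscale t d))) d - (G0 + L * dd * t).
have psi_deriv : forall c, 0 <= c <= 1 -> derivable_pt_lim psi c (psi' c).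
  move=> c _; apply: derivable_pt_lim_minus; first exact: directional_derivative.
  have -> : G0 + L * dd * c = G0 * 1 + L / 2 * dd * (INR 2 * c ^ Nat.pred 2).
    by rewrite /=; field.
  apply: (derivable_pt_lim_plus (fun t => t * G0) (fun t => L / 2 * dd * t ^ 2)).
  - have -> : (fun t => t * G0) = mult_real_fct G0 id.
      by apply: functional_extensionality => t; rewrite /mult_real_fct /id; ring.
    exact/derivable_pt_lim_scal/derivable_pt_lim_id.
  - exact/(derivable_pt_lim_scal (fun t => t ^ 2))/derivable_pt_lim_pow.
have [c [psi_mvt c01]] := MVT_cor2 psi psi' 0 1 ltac:(lra) psi_deriv.
have psi'_le0 : psi' c <= 0.
  set a := vsub (dg (vadd y (vscale c d))) (dg y).
  have a_le : norm a <= L * (c * norm d).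
    have := dg_lip (vadd y (vscale c d)) y.
    have -> : vsub (vadd y (vscale c d)) y = vscale c d by vec_ring.
    rewrite normZ (Rabs_pos_eq c); [exact | lra].
  have aa_le : inner a a <= (L * c) ^ 2 * dd.
    rewrite -norm_sqr /dd -norm_sqr.
    by have := norm_ge0 a; have := norm_ge0 d; nra.
  have := inner_self_ge0 (vsub a (vscale (L * c) d)).
  rewrite sqnormB innerZr sqnormZ -/dd => quad_ge0.
  have Lc_gt0 : 0 < L * c by nra.
  have : inner a d <= L * c * dd by nra.
  by rewrite /psi' /a innerBl -/G0; lra.
have psi1 : psi 1 = g (vadd y d) - (G0 + L / 2 * dd).
  by rewrite /psi (_ : vscale 1 d = d); [ring | vec_ring].
have psi0 : psi 0 = g y.
  by rewrite /psi (_ : vadd y (vscale 0 d) = y); [ring | vec_ring].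
nra.
Qed.

End Smooth.

Lemma accelerated_descent (n : nat) (g : vec n -> R) (dg : vec n -> vec n) (L t : R)
    (xk zk z' xs : vec n) :
  convexR g -> has_gradient g dg -> 0 < L -> lipschitz_grad dg L -> 0 <= t <= 1 ->
  g (vadd (vscale (1 - t) xk) (vscale t z'))
  <= (1 - t) * g xk + t * g xs
     - t * inner (dg (vadd (vscale (1 - t) xk) (vscale t zk))) (vsub xs z')
     + L * t ^ 2 / 2 * inner (vsub z' zk) (vsub z' zk).
Proof.
move=> g_conv g_grad L_gt0 dg_lip t01.
set y := vadd _ (vscale t zk); set x' := vadd _ _; set G := dg y.
have := descent_lemma g_grad L_gt0 dg_lip y (vscale t (vsub z' zk)).
have -> : vadd y (vscale t (vsub z' zk)) = x' by rewrite /x' /y; vec_ring.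
have -> : inner G (vscale t (vsub z' zk))
          = (1 - t) * inner G (vsub xk y) + t * inner G (vsub xs y) - t * inner G (vsub xs z').
  have -> : vscale t (vsub z' zk)
            = vadd (vscale (1 - t) (vsub xk y)) (vscale t (vsub (vsub xs y) (vsub xs z'))).
    by rewrite /y; vec_ring.
  by rewrite innerDr !innerZr !innerBr; ring.
have gk := convex_gradient_ineq g_grad g_conv y xk.
have gs := convex_gradient_ineq g_grad g_conv y xs.
have := Rmult_le_compat_l (1 - t) _ _ ltac:(lra) gk.
have := Rmult_le_compat_l t _ _ ltac:(lra) gs.
rewrite sqnormZ -/G; lra.
Qed.

Lemma theta_update_bounds (t : R) : 0 < t <= 1 ->
  let s := (- t ^ 2 + sqrt (t ^ 4 + 4 * t ^ 2)) / 2 in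
  0 < s <= 1 /\ s ^ 2 = (1 - s) * t ^ 2 /\ s * (2 + t) <= 2 * t.
Proof.
move=> t01 s; set r := sqrt (t ^ 4 + 4 * t ^ 2).
have rr : r * r = t ^ 4 + 4 * t ^ 2 by apply: sqrt_sqrt; nra.
have r_ge0 : 0 <= r by apply: sqrt_pos.
have r_gt : t ^ 2 < r by nra.
have r_le : r <= t ^ 2 + 2 by nra.
have s_eq : s ^ 2 = (1 - s) * t ^ 2 by rewrite /s -/r; nra.
split; [rewrite /s -/r; lra | split => //].
(* [s] solves [s^2 + t^2 s - t^2 = 0], whence
   [(2t - u)(2t + u + t^2(2 + t)) = t^4] for [u = s(2 + t)]. *)
set u := s * (2 + t).
have u_eq : (2 * t - u) * (2 * t + u + t ^ 2 * (2 + t)) = t ^ 4 by rewrite /u; nra.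
have u_pos : 0 < 2 * t + u + t ^ 2 * (2 + t) by rewrite /u /s -/r; nra.
have : 0 < t ^ 4 by apply: pow_lt; lra.
by clearbody u; nra.
Qed.

Lemma theta_bounds k : 0 < theta k <= 1 /\ theta k * (INR k + 2) <= 2.
Proof.
elim: k => [|k [theta01 theta_le]]; first by rewrite /=; lra.
rewrite S_INR /=.
have [s01 [_ s_le]] := theta_update_bounds theta01.
split => //; set s := _ / 2 in s01 s_le *.
have : s * (INR k + 1 + 2) * (2 + theta k) <= 2 * (2 + theta k) by have := pos_INR k; nra.
nra.
Qed.

Lemma theta_sq_succ k : theta (S k) ^ 2 = (1 - theta (S k)) * theta k ^ 2.
Proof. by have [_ [->]] := theta_update_bounds (proj1 (theta_bounds k)). Qed.

Lemma convexE_finite (n : nat) (h : vec n -> ER) x y t a b :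
  convexE h -> h x = Fin a -> h y = Fin b -> 0 <= t <= 1 ->
  exists c, h (vadd (vscale t x) (vscale (1 - t) y)) = Fin c /\ c <= t * a + (1 - t) * b.
Proof.
move=> h_conv hx hy t01; have := h_conv x y t a b t01; rewrite hx hy /=.
by case: (h _) => [c|] /(_ (Rle_refl _) (Rle_refl _)) //; exists c.
Qed.

(* Smooth part of the [z]-subproblem: [G] is the gradient at [y], [B] the penalty
   and [c] the proximal weight. *)
Definition prox_model (n m : nat) (G : vec n) (lam : vec m) (A : vec n -> vec m) (b : vec m)
    (B c : R) (zk v : vec n) : R :=
  inner G v + inner lam (A v) + B / 2 * inner (vsub (A v) b) (vsub (A v) b)
  + c / 2 * inner (vsub v zk) (vsub v zk).

Lemma prox_model_optimality (n m : nat) (h : vec n -> ER) G lam (A : vec n -> vec m) b B c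
    zk u w hu hw :
  convexE h -> linear_map A ->
  (forall v, ER_le (ER_add (Fin (prox_model G lam A b B c zk u)) (h u))
                   (ER_add (Fin (prox_model G lam A b B c zk v)) (h v))) ->
  h u = Fin hu -> h w = Fin hw ->
  0 <= inner G (vsub w u) + inner (vadd lam (vscale B (vsub (A u) b))) (A (vsub w u))
       + c * inner (vsub u zk) (vsub w u) + hw - hu.
Proof.
move=> h_conv A_lin u_opt hu_fin hw_fin; set d := vsub w u.
set slope := _ + hw - hu; set curv := B * inner (A d) (A d) + c * inner d d.
suff : - slope <= 0 by lra.
apply: (le0_of_le_scaled (c := curv / 2)) => s s01.
have [v [hv_fin hv_le]] := convexE_finite (t := s) h_conv hw_fin hu_fin ltac:(lra).
rewrite (_ : vadd (vscale s w) (vscale (1 - s) u) = vadd u (vscale s d)) in hv_fin;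
  last by rewrite /d; vec_ring.
have := u_opt (vadd u (vscale s d)); rewrite hu_fin hv_fin /=.
have -> : prox_model G lam A b B c zk (vadd u (vscale s d))
          = prox_model G lam A b B c zk u
            + s * (inner G d + inner (vadd lam (vscale B (vsub (A u) b))) (A d)
                   + c * inner (vsub u zk) d) + s ^ 2 / 2 * curv.
  rewrite /prox_model (linear_mapD A_lin) (linear_mapZ A_lin).
  have -> : vsub (vadd (A u) (vscale s (A d))) b = vadd (vsub (A u) b) (vscale s (A d)).
    by vec_ring.
  have -> : vsub (vadd u (vscale s d)) zk = vadd (vsub u zk) (vscale s d) by vec_ring.
  clearbody d; rewrite !sqnormDZ (innerDr (A u)) (innerDr u) innerDl !innerZr innerZl /curv.
  field.
move=> opt_le.
have : 0 <= s * slope + s ^ 2 / 2 * curv by rewrite /slope; clearbody d curv; nra.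
move=> ?; apply: (Rmult_le_reg_l s); nra.
Qed.

Lemma multiplier_three_point (m : nat) t (lam lam' lams e : vec m) :
  0 < t <= 1 -> e = vscale t (vsub lam' lam) ->
  t * (inner lams e - inner lam' e) + t / 2 * inner e e
  <= t ^ 2 / 2 * (inner (vsub lam lams) (vsub lam lams)
                  - inner (vsub lam' lams) (vsub lam' lams)).
Proof.
move=> t01 ->; have := sqnorm_three_point lam' lam lams.
rewrite innerBr sqnormZ !innerZr (innerC lams) (innerC lam').
have := inner_self_ge0 (vsub lam' lam).
(* [t/2 |e|^2 = t^3/2 |lam' - lam|^2 <= t^2/2 |lam' - lam|^2] *)
have : t ^ 3 <= t ^ 2 by nra.
nra.
Qed.

Definition aug_gap (n m : nat) (g : vec n -> R) (A : vec n -> vec m) (b : vec m)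
    (xs : vec n) (hs : R) (lams : vec m) (v : vec n) (hv : R) : R :=
  g v + hv - (g xs + hs) + inner lams (vsub (A v) b)
  + 1 / 2 * inner (vsub (A v) b) (vsub (A v) b).

Definition palm_energy (n m : nat) (L : R) (zk xs : vec n) (lamk lams : vec m) : R :=
  L * inner (vsub zk xs) (vsub zk xs) + inner (vsub lamk lams) (vsub lamk lams).

Lemma palm_one_step (n m : nat) (g : vec n -> R) (dg : vec n -> vec n) (h : vec n -> ER)
    (L : R) (A : vec n -> vec m) (b : vec m) (xs : vec n) (lams : vec m) (hs t : R)
    (xk zk z' : vec n) (lam lam' : vec m) (a hz' hx' : R) :
  convexR g -> has_gradient g dg -> 0 < L -> lipschitz_grad dg L ->
  convexE h -> linear_map A -> A xs = b -> h xs = Fin hs -> 0 < t <= 1 ->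
  lam' = vadd lam (vscale (1 / t) (vsub (A z') b)) ->
  (forall w,
     ER_le (ER_add (Fin (prox_model (dg (vadd (vscale (1 - t) xk) (vscale t zk))) lam A b
                                    (1 / t) (L * t) zk z')) (h z'))
           (ER_add (Fin (prox_model (dg (vadd (vscale (1 - t) xk) (vscale t zk))) lam A b
                                    (1 / t) (L * t) zk w)) (h w))) ->
  h z' = Fin hz' -> hx' <= (1 - t) * a + t * hz' ->
  aug_gap g A b xs hs lams (vadd (vscale (1 - t) xk) (vscale t z')) hx'
  <= (1 - t) * aug_gap g A b xs hs lams xk a
     + t ^ 2 / 2 * (palm_energy L zk xs lam lams - palm_energy L z' xs lam' lams).
Proof.
move=> g_conv g_grad L_gt0 dg_lip h_conv A_lin feas hs_fin t01 lam'_def z'_opt hz'_fin hx'_le.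
set G := dg _ in z'_opt; set e := vsub (A z') b.
have smooth := accelerated_descent xk zk z' xs g_conv g_grad L_gt0 dg_lip (t := t) ltac:(lra).
have := prox_model_optimality h_conv A_lin z'_opt hz'_fin hs_fin.
rewrite -lam'_def (linear_mapB A_lin) feas.
have -> : vsub b (A z') = vscale (-1) e by rewrite /e; vec_ring.
rewrite innerZr => opt.
have dual : e = vscale t (vsub lam' lam).
  by rewrite lam'_def /e; apply: functional_extensionality => j; cbv [vadd vsub vscale];
     field; lra.
have {}dual := multiplier_three_point lams t01 dual.
have primal := sqnorm_three_point z' zk xs.
have gap_x' : vsub (A (vadd (vscale (1 - t) xk) (vscale t z'))) b
              = vadd (vscale (1 - t) (vsub (A xk) b)) (vscale t e).
  by rewrite (linear_mapD A_lin) !(linear_mapZ A_lin) /e; vec_ring.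
have penalty := sqnorm_convex (vsub (A xk) b) e (t := t) ltac:(lra).
rewrite -gap_x' in penalty.
have multiplier : inner lams (vsub (A (vadd (vscale (1 - t) xk) (vscale t z'))) b)
                  = (1 - t) * inner lams (vsub (A xk) b) + t * inner lams e.
  by rewrite gap_x' innerDr !innerZr.
have := Rmult_le_pos _ _ (Rlt_le _ _ (proj1 t01)) opt.
have := f_equal (Rmult (L * t ^ 2 / 2)) primal.
rewrite -/G in smooth; rewrite /aug_gap /palm_energy; lra.
Qed.

Section FastPALM.
Variables (n m : nat) (g : vec n -> R) (dg : vec n -> vec n) (h : vec n -> ER) (L : R)
  (A : vec n -> vec m) (b : vec m) (xs : vec n) (lams : vec m) (hs : R).
Hypotheses (L_gt0 : 0 < L) (g_conv : convexR g) (g_grad : has_gradient g dg)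
  (dg_lip : lipschitz_grad dg L) (h_proper : proper_fun h) (h_conv : convexE h)
  (A_lin : linear_map A) (feas : forall j, A xs j = b j) (hs_fin : h xs = Fin hs).
Variables (x z y : nat -> vec n) (lam : nat -> vec m).
Hypothesis y_def : forall k i, y (S k) i = (1 - theta k) * x k i + theta k * z k i.
Hypothesis z_opt : forall k (w : vec n),
  ER_le
    (ER_add (Fin (inner (dg (y (S k))) (z (S k)) + inner (lam k) (A (z (S k)))
                  + beta k / 2 * inner (vsub (A (z (S k))) b) (vsub (A (z (S k))) b)
                  + L * theta k / 2 * inner (vsub (z (S k)) (z k)) (vsub (z (S k)) (z k))))
            (h (z (S k))))
    (ER_add (Fin (inner (dg (y (S k))) w + inner (lam k) (A w)
                  + beta k / 2 * inner (vsub (A w) b) (vsub (A w) b)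
                  + L * theta k / 2 * inner (vsub w (z k)) (vsub w (z k))))
            (h w)).
Hypothesis x_def : forall k i, x (S k) i = (1 - theta k) * x k i + theta k * z (S k) i.
Hypothesis lam_def : forall k j, lam (S k) j = lam k j + beta k * (A (z (S k)) j - b j).

Let gap := aug_gap g A b xs hs lams.
Let energy k := palm_energy L (z k) xs (lam k) lams.

Lemma palm_z_finite k : exists v, h (z (S k)) = Fin v.
Proof.
case: h_proper => w hw_fin; have := z_opt k w.
by case: (h (z (S k))) => [v|]; [exists v | case: (h w) hw_fin].
Qed.

Lemma palm_gap_step k a hz hx :
  h (z (S k)) = Fin hz -> hx <= (1 - theta k) * a + theta k * hz ->
  gap (x (S k)) hx <= (1 - theta k) * gap (x k) a + theta k ^ 2 / 2 * (energy k - energy (S k)).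
Proof.
move=> hz_fin hx_le.
have y_eq : y (S k) = vadd (vscale (1 - theta k) (x k)) (vscale (theta k) (z k)).
  exact: functional_extensionality (y_def k).
have x_eq : x (S k) = vadd (vscale (1 - theta k) (x k)) (vscale (theta k) (z (S k))).
  exact: functional_extensionality (x_def k).
have lam_eq : lam (S k) = vadd (lam k) (vscale (1 / theta k) (vsub (A (z (S k))) b)).
  exact: functional_extensionality (lam_def k).
have z_opt_k := z_opt k; rewrite y_eq in z_opt_k.
rewrite /gap /energy x_eq.
apply: palm_one_step g_conv g_grad L_gt0 dg_lip h_conv A_lin _ hs_fin _ lam_eq z_opt_k
                    hz_fin hx_le.
- exact: functional_extensionality feas.
- exact: proj1 (theta_bounds k).
Qed.

Lemma palm_gap_bound k :
  exists v, h (x (S k)) = Fin v /\ gap (x (S k)) v <= theta k ^ 2 / 2 * (energy 0 - energy (S k)).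
Proof.
elim: k => [|k [v [hv_fin IH]]].
  have [w hw_fin] := palm_z_finite 0.
  have x1 : x 1%nat = z 1%nat by apply: functional_extensionality => i; rewrite x_def /=; ring.
  exists w; split; first by rewrite x1.
  have := palm_gap_step (a := 0) (hx := w) hw_fin ltac:(rewrite /=; lra).
  by rewrite x1 /=; lra.
have [w hw_fin] := palm_z_finite (S k).
have [[theta_gt0 theta_le1] _] := theta_bounds (S k).
have [hx [hx_fin hx_le]] := convexE_finite h_conv hw_fin hv_fin (t := theta (S k)) ltac:(lra).
rewrite (_ : vadd _ _ = x (S (S k))) in hx_fin; last first.
  by apply: functional_extensionality => i; rewrite x_def /vadd /vscale; ring.
exists hx; split => //.
have := palm_gap_step hw_fin (ltac:(lra) : hx <= (1 - theta (S k)) * v + theta (S k) * w).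
have := Rmult_le_compat_l (1 - theta (S k)) _ _ ltac:(lra) IH.
have telescope : (1 - theta (S k)) * (theta k ^ 2 / 2 * (energy 0 - energy (S k)))
                 = theta (S k) ^ 2 / 2 * (energy 0 - energy (S k)).
  by rewrite theta_sq_succ; lra.
lra.
Qed.

End FastPALM.

Theorem theorem1
  (n m : nat) (g : vec n -> R) (dg : vec n -> vec n) (h : vec n -> ER)
  (L : R) (A : vec n -> vec m) (AT : vec m -> vec n) (b : vec m)
  (HL : 0 < L)
  (Hg_conv : convexR g) (Hg_grad : has_gradient g dg) (Hg_lip : lipschitz_grad dg L)
  (Hh_proper : proper_fun h) (Hh_conv : convexE h) (Hh_lsc : lscE h)
  (HA : linear_map A) (HAT : is_adjoint A AT)
  (xs : vec n) (lams : vec m)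
  (Hfeas : forall j, A xs j = b j)
  (Hsaddle : subgrad (fun x => ER_add (Fin (g x)) (h x)) xs
                     (vscale (-1) (AT lams)))
  (x z y : nat -> vec n) (lam : nat -> vec m)
  (Hy : forall k i, y (S k) i = (1 - theta k) * x k i + theta k * z k i)
  (Hz : forall k (w : vec n),
      ER_le
        (ER_add (Fin (inner (dg (y (S k))) (z (S k)) + inner (lam k) (A (z (S k)))
                      + beta k / 2 * inner (vsub (A (z (S k))) b) (vsub (A (z (S k))) b)
                      + L * theta k / 2 * inner (vsub (z (S k)) (z k)) (vsub (z (S k)) (z k))))
                (h (z (S k))))
        (ER_add (Fin (inner (dg (y (S k))) w + inner (lam k) (A w)
                      + beta k / 2 * inner (vsub (A w) b) (vsub (A w) b)
                      + L * theta k / 2 * inner (vsub w (z k)) (vsub w (z k))))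
                (h w)))
  (Hx : forall k i, x (S k) i = (1 - theta k) * x k i + theta k * z (S k) i)
  (Hlam : forall k j, lam (S k) j = lam k j + beta k * (A (z (S k)) j - b j))
  (K : nat) (HK : (0 < K)%nat) :
  exists hK hs,
    h (x (S K)) = Fin hK /\ h xs = Fin hs /\
    (g (x (S K)) + hK) - (g xs + hs)
      + inner lams (vsub (A (x (S K))) b)
      + 1 / 2 * inner (vsub (A (x (S K))) b) (vsub (A (x (S K))) b)
    <= 2 / (INR K + 2) ^ 2
       * (L * inner (vsub (z O) xs) (vsub (z O) xs)
          + inner (vsub (lam O) lams) (vsub (lam O) lams)).
Proof.
have [hs hs_fin] : exists hs, h xs = Fin hs.
  by case: Hsaddle => fx []; case: (h xs) => [r|] // _ _; exists r.
have [hK [hK_fin gap_le]] :=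
  palm_gap_bound lams HL Hg_conv Hg_grad Hg_lip Hh_proper Hh_conv HA Hfeas hs_fin Hy Hz Hx Hlam K.
exists hK, hs; do 2 split => //.
have energy_ge0 k : 0 <= palm_energy L (z k) xs (lam k) lams.
  by rewrite /palm_energy; have := inner_self_ge0 (vsub (z k) xs);
     have := inner_self_ge0 (vsub (lam k) lams); nra.
have [[theta_gt0 _] theta_le] := theta_bounds K.
have K2_gt0 : 0 < INR K + 2 by have := pos_INR K; lra.
have theta_le' : theta K <= 2 / (INR K + 2).
  by apply: (Rmult_le_reg_r (INR K + 2)) => //; rewrite /Rdiv Rmult_assoc Rinv_l; lra.
have -> : 2 / (INR K + 2) ^ 2 = (2 / (INR K + 2)) ^ 2 / 2 by field; lra.
move: gap_le (energy_ge0 0%nat) (energy_ge0 (S K)); rewrite /aug_gap /palm_energy /=.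
have : theta K ^ 2 <= (2 / (INR K + 2)) ^ 2 by nra.
nra.
Qed.
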